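(* Let $m\ge1$, $n\ge0$, $d=m-n$, and let $\lambda$ be a partition with $\lambda_1+d-1\ge0$. Put $\hat x=(x_2,\dots,x_m)$ and $\hat\lambda=(\lambda_2,\lambda_3,\dots)$. Then $$\Big\{SP_\lambda(x,y)\,x^{\rho_m}y^{\rho_n}\Big\}=\Big\{\prod_{j=1}^n(x_1-y_j)\,x_1^{\lambda_1+d-1}\,SP_{\hat\lambda}(\hat x,y)\,x_2^{m-2}x_3^{m-3}\cdots x_m^{0}\,y^{\rho_n}\Big\}.$$
   Context: For a function $f(x,y)$ of $x=(x_1,\dots,x_m)$ and $y=(y_1,\dots,y_n)$, define $\{f\}=\sum_{w\in S_m\times S_n}\varepsilon(w)\,w(f)$. Here $S_m$ permutes the $x_i$, $S_n$ permutes the $y_j$, and $\varepsilon$ is the sign character. Set $x^{\rho_m}=x_1^{m-1}x_2^{m-2}\cdots x_m^0$ and $y^{\rho_n}=y_1^{n-1}\cdots y_n^0$. For a partition $\mu$ and any finite lists of variables $x,y$, the super Schur polynomial is defined by the Jacobi–Trudy formula $SP_\mu(x,y)=\det(h_{\mu_r-r+s}(x,y))_{r,s=1}^{l(\mu)}$, with $SP_\emptyset=1$. The $h_a(x,y)$ are given by $\prod_j(1-ty_j)/\prod_i(1-tx_i)=\sum_{a\ge0}h_a(x,y)t^a$, and $h_a=0$ for $a<0$. Here $l(\mu)$ is the number of nonzero parts of $\mu$. *)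

From HB Require Import structures.
From mathcomp Require Import all_boot all_order all_algebra all_fingroup.
Set Implicit Arguments. Unset Strict Implicit. Unset Printing Implicit Defensive.
Import Order.TTheory GRing.Theory Num.Theory.
Local Open Scope ring_scope.

(* h_a(x,y) = coefficient of t^a in prod_j (1 - t y_j) / prod_i (1 - t x_i).
   The geometric series 1/(1 - t x_i) is truncated at degree a, which does not
   affect the coefficient of t^a. *)
Definition hsuper (R : comRingType) (xs ys : seq R) (a : nat) : R :=
  ((\prod_(yj <- ys) (1 - yj *: 'X)) *
   \prod_(xi <- xs) \sum_(k < a.+1) (xi *: 'X) ^+ k)`_a.

Definition hsuperZ (R : comRingType) (xs ys : seq R) (a : int) : R :=
  match a with
  | Posz k => hsuper xs ys k
  | Negz _ => 0
  end.

Definition plen (mu : seq nat) : nat := count (fun p => p != 0%N) mu.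

(* super Schur polynomial via Jacobi-Trudy; 0-based indices r,s
   (mu_r - r + s is unchanged by the shift). det of 0x0 matrix = 1. *)
Definition SP (R : comRingType) (xs ys : seq R) (mu : seq nat) : R :=
  \det (\matrix_(r < plen mu, s < plen mu)
          hsuperZ xs ys ((nth 0%N mu r)%:Z - (r : nat)%:Z + (s : nat)%:Z)).

Definition is_partition (mu : seq nat) : bool := sorted geq mu.

Definition antisym (R : comRingType) (m n : nat)
    (f : ('I_m -> R) -> ('I_n -> R) -> R) (x : 'I_m -> R) (y : 'I_n -> R) : R :=
  \sum_(s : 'S_m) \sum_(t : 'S_n)
     ((-1) ^+ odd_perm s * (-1) ^+ odd_perm t) * f (x \o s) (y \o t).

Definition xrho (R : comRingType) (m : nat) (x : 'I_m -> R) : R :=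
  \prod_(i < m) x i ^+ (m - 1 - i)%N.

From HB Require Import structures.
From mathcomp Require Import all_boot all_order all_algebra all_fingroup.
From mathcomp Require Import ring.
Import GRing.Theory.
Local Open Scope ring_scope.

(* Both sides factor as (something) * alt(y^rho), so everything reduces to an
   identity in the x variables (SP_mul_alt_xrho), proved as follows.
   - h_a(x,y) is the coefficient of t^a in prod(1 - y t) / prod(1 - x t); we work
     with truncated geometric series and congruences modulo t^N.
   - Bialternant formula (det_bialt_mx_complete): the alternant with first column
     x_j^(b-n) prod_y (x_j - y) and other columns x_j^(m-l) equals
     h_(b-m)(x,y) times the Vandermonde determinant.  It comes from factoring this
     alternant as (elementary symmetric functions) * (complete functions).
   - Expanding the Jacobi-Trudy determinant of SP_lam along its first row, each
     h_(lam_1+k) times the Vandermonde becomes such a bialternant, i.e. an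
     antisymmetrization singling out the first variable x_1.
   - Collecting the first-row cofactors with weights x_1^k gives SP_lam^(x^,y)
     (SP_cofactor_expand), by the recursion h_b(x^) = h_b(x) - x_1 h_(b-1)(x). *)

Section TruncatedSeries.
Context {R : comRingType}.

Definition geom (N : nat) (c : R) : {poly R} := \sum_(k < N) (c *: 'X) ^+ k.

Lemma coef_geom N c i : (geom N c)`_i = if (i < N)%N then c ^+ i else 0.
Proof.
rewrite /geom coef_sum.
under eq_bigr => k _ do rewrite exprZn coefZ coefXn.
case: ltnP => [ltiN | leNi].
  rewrite (bigD1 (Ordinal ltiN)) //= eqxx mulr1 big1 ?addr0 // => k.
  by rewrite -val_eqE /= eq_sym => /negbTE ->; rewrite mulr0.
by rewrite big1 // => k _; rewrite gtn_eqF ?mulr0 // (leq_trans (ltn_ord k) leNi).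
Qed.

Definition agree_below N (p q : {poly R}) := forall i, (i < N)%N -> p`_i = q`_i.

Lemma agree_belowM N p1 p2 q1 q2 :
  agree_below N p1 q1 -> agree_below N p2 q2 -> agree_below N (p1 * p2) (q1 * q2).
Proof.
move=> e1 e2 i ltiN; rewrite !coefM; apply: eq_bigr => j _.
have ltjN : (j < N)%N := leq_ltn_trans (ltn_ord j : (j <= i)%N) ltiN.
by rewrite e1 // e2 // (leq_ltn_trans (leq_subr j i) ltiN).
Qed.

Lemma agree_below_prod (I : Type) (r : seq I) (P : pred I) (F G : I -> {poly R}) N :
  (forall i, P i -> agree_below N (F i) (G i)) ->
  agree_below N (\prod_(i <- r | P i) F i) (\prod_(i <- r | P i) G i).
Proof.
move=> eFG; elim: r => [|a r IH]; first by rewrite !big_nil.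
by rewrite !big_cons; case: ifP => Pa //; apply: agree_belowM (eFG a Pa) IH.
Qed.

(* (1 - cX) * geom N c = 1 - (cX)^N is 1 modulo X^N. *)
Lemma agree_below_geom N c : agree_below N ((1 - c *: 'X) * geom N c) 1.
Proof.
have -> : (1 - c *: 'X) * geom N c = 1 - (c *: 'X) ^+ N.
  rewrite -(expr1n _ N) subrXX expr1n; congr (_ * _).
  by apply: eq_bigr => i _; rewrite expr1n mul1r.
by move=> i ltiN; rewrite coefB exprZn coefZ coefXn ltn_eqF // mulr0 subr0.
Qed.

Lemma coef_linM (p : {poly R}) c i :
  ((1 - c *: 'X) * p)`_i = p`_i - c * (if i is i'.+1 then p`_i' else 0).
Proof. by rewrite mulrBl mul1r coefB -scalerAl coefZ coefXM; case: i. Qed.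

Lemma coef_prod_lin_geom (w : R) N (zs : seq R) b :
  (size zs <= b)%N -> (b < N)%N ->
  ((\prod_(z <- zs) (1 - z *: 'X)) * geom N w)`_b
    = w ^+ (b - size zs) * \prod_(z <- zs) (w - z).
Proof.
elim: zs b => [|z zs IH] b lezb ltbN.
  by rewrite !big_nil mul1r coef_geom ltbN subn0 mulr1.
rewrite !big_cons -mulrA coef_linM.
case: b lezb ltbN => [//|b] /= lezb ltbN.
rewrite (IH b.+1) ?(ltnW lezb) // (IH b) ?(ltnW ltbN) // subSS subSn //.
by rewrite exprS -mulrA -mulrBl mulrCA.
Qed.

Lemma coefM_size_le (Q P : {poly R}) M c : (size Q <= M)%N ->
  (Q * P)`_c = \sum_(k < M) Q`_k * (if (k <= c)%N then P`_(c - k) else 0).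
Proof.
move=> leQM; set F := fun k : nat => Q`_k * (if (k <= c)%N then P`_(c - k) else 0).
have widen n1 n2 : (n1 <= n2)%N -> (forall k, (n1 <= k)%N -> F k = 0) ->
    \sum_(k < n1) F k = \sum_(k < n2) F k.
  move=> len Fz; rewrite (big_ord_widen _ _ len) big_mkcond; apply: eq_bigr => k _.
  by case: ifP => // /negbT; rewrite -leqNgt => /Fz ->.
rewrite coefM (widen M (M + c.+1)%N) ?leq_addr //; last first.
  by move=> k leMk; rewrite /F nth_default ?mul0r // (leq_trans leQM).
rewrite -(widen c.+1) ?leq_addl //; last by move=> k ltck; rewrite /F leqNgt ltck mulr0.
by apply: eq_bigr => k _; rewrite /F -ltnS ltn_ord.
Qed.

End TruncatedSeries.

Section CompleteSuper.
Context {R : comRingType}.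
Implicit Types (xs ys : seq R) (a b : nat).

Lemma hsuper_trunc xs ys a N : (a < N)%N ->
  hsuper xs ys a = ((\prod_(y <- ys) (1 - y *: 'X)) * \prod_(x <- xs) geom N x)`_a.
Proof.
move=> ltaN; apply: (@agree_belowM _ a.+1) => //.
apply: agree_below_prod => x _ i ltia.
by rewrite -/(geom _ _) !coef_geom ltia (leq_trans ltia ltaN).
Qed.

Lemma hsuper0 xs ys : hsuper xs ys 0 = 1.
Proof.
rewrite /hsuper coef0M !coef0_prod !big1 ?mulr1 // => i _.
  by rewrite big_ord1 expr0 coef1.
by rewrite coefB coef1 coefZ coefX mulr0 subr0.
Qed.

Lemma hsuper_drop (w : R) ws ys b :
  hsuper ws ys b = hsuper (w :: ws) ys b
                   - w * (if b is b'.+1 then hsuper (w :: ws) ys b' else 0).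
Proof.
set P := (\prod_(y <- ys) (1 - y *: 'X)) * \prod_(x <- ws) geom b.+1 x.
have hwE a : (a < b.+1)%N -> hsuper (w :: ws) ys a = (geom b.+1 w * P)`_a.
  by move=> ltab; rewrite (hsuper_trunc _ _ _ _ ltab) big_cons mulrCA.
have -> : hsuper (w :: ws) ys b - w * (if b is b'.+1 then hsuper (w :: ws) ys b' else 0)
          = ((1 - w *: 'X) * (geom b.+1 w * P))`_b.
  rewrite coef_linM hwE //; case: (b) hwE => [|b'] hwE' //.
  by rewrite hwE' // ltnS leqnSn.
rewrite mulrA (@agree_belowM _ b.+1 _ P 1 P (agree_below_geom _ _)) // mul1r.
exact: hsuper_trunc.
Qed.

Lemma hsuperZ_nat xs ys a b :
  hsuperZ xs ys (a%:Z - b%:Z) = if (b <= a)%N then hsuper xs ys (a - b) else 0.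
Proof.
case: leqP => [leba | ltab]; first by rewrite subzn.
suff -> : a%:Z - b%:Z = Negz (b - a).-1 by [].
by rewrite NegzE prednK ?subn_gt0 // -(subzn (ltnW ltab)) opprB.
Qed.

Lemma hsuperZ_drop (w : R) ws ys (c : int) :
  hsuperZ ws ys c = hsuperZ (w :: ws) ys c - w * hsuperZ (w :: ws) ys (c - 1).
Proof.
case: c => [[|b]|k] /=; first by rewrite (hsuper_drop w).
  by rewrite subn1 (hsuper_drop w).
by rewrite mulr0 subr0.
Qed.

Lemma hsuperZ_perm {xs1 xs2 ys1 ys2} (a : int) :
  perm_eq xs1 xs2 -> perm_eq ys1 ys2 -> hsuperZ xs1 ys1 a = hsuperZ xs2 ys2 a.
Proof.
by move=> pxs pys; case: a => //= k; rewrite /hsuper (perm_big _ pxs) (perm_big _ pys).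
Qed.

Lemma SP_perm {xs1 xs2 ys1 ys2} mu :
  perm_eq xs1 xs2 -> perm_eq ys1 ys2 -> SP xs1 ys1 mu = SP xs2 ys2 mu.
Proof.
move=> pxs pys; congr (\det _); apply/matrixP => i j; rewrite !mxE.
exact: hsuperZ_perm.
Qed.

Lemma perm_map_enum {k} (f : 'I_k -> R) (s : 'S_k) :
  perm_eq [seq (f \o s) i | i <- enum 'I_k] [seq f i | i <- enum 'I_k].
Proof.
rewrite (map_comp f s); apply: perm_map.
apply: uniq_perm; [by rewrite map_inj_uniq ?enum_uniq //; exact: perm_inj|exact: enum_uniq|].
move=> i; rewrite mem_enum; apply/mapP; exists (s^-1 i)%g; first by rewrite mem_enum.
by rewrite permKV.
Qed.

End CompleteSuper.

Section Antisymmetrization.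
Context {R : comRingType}.

Definition alt {k : nat} (F : ('I_k -> R) -> R) (x : 'I_k -> R) : R :=
  \sum_(s : 'S_k) (-1) ^+ s * F (x \o s).

Lemma antisym_factor m n (f : ('I_m -> R) -> ('I_n -> R) -> R) (c : R)
    (F : ('I_m -> R) -> R) (G : ('I_n -> R) -> R) x y :
  (forall (s : 'S_m) (t : 'S_n), f (x \o s) (y \o t) = c * F (x \o s) * G (y \o t)) ->
  antisym f x y = c * alt F x * alt G y.
Proof.
move=> fE; rewrite /antisym /alt [c * _]mulr_sumr mulr_suml; apply: eq_bigr => s _.
rewrite mulr_sumr; apply: eq_bigr => t _.
by rewrite fE mulrACA (mulrCA ((-1) ^+ s) c).
Qed.

End Antisymmetrization.

Section Bialternant.
Context {R : comRingType} {m : nat} (x : 'I_m.+1 -> R).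

Let xs := [seq x i | i <- enum 'I_m.+1].

(* Generating polynomial of the signed elementary symmetric functions of the
   variables other than x_j. *)
Definition elem_poly (j : 'I_m.+1) : {poly R} := \prod_(i | i != j) (1 - x i *: 'X).

Lemma size_elem_poly j : (size (elem_poly j) <= m.+1)%N.
Proof.
apply: leq_trans (size_poly_prod_leq _ _) _.
have size_lin i : (size (1 - x i *: 'X)%R <= 2)%N.
  apply: leq_trans (size_polyD _ _) _; rewrite geq_max size_poly1 size_polyN.
  by rewrite (leq_trans (size_scale_leq _ _)) // size_polyX.
have card_j : #|[pred i | i != j]| = m.
  by rewrite -[m]/(m.+1.-1) -[in RHS](card_ord m.+1) -(cardC1 j); apply: eq_card.
apply: leq_trans (_ : ((\sum_(i | i != j) 2%N).+1 - #|[pred i | i != j]|)%N <= _)%N.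
  by rewrite leq_sub2r // ltnS leq_sum.
by rewrite sum_nat_const card_j muln2 -addnn -addSn addnK.
Qed.

(* Convolving e(x without x_j) with h(x, zs) cancels every 1/(1 - x_i t), i != j:
   sum_k e_k h_(c-k) = x_j^(c - #zs) prod_(z in zs) (x_j - z). *)
Lemma elem_complete_conv j (zs : seq R) c : (size zs <= c)%N ->
  \sum_(k < m.+1) (elem_poly j)`_k * hsuperZ xs zs (c%:Z - k%:Z)
    = x j ^+ (c - size zs) * \prod_(z <- zs) (x j - z).
Proof.
move=> lezc; set Z := \prod_(z <- zs) (1 - z *: 'X).
set P := Z * \prod_(x' <- xs) geom c.+1 x'.
have hE (k : 'I_m.+1) :
    hsuperZ xs zs (c%:Z - k%:Z) = if (k <= c)%N then P`_(c - k) else 0.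
  by rewrite hsuperZ_nat; case: ifP => // lekc; rewrite (hsuper_trunc _ _ _ c.+1) ?ltnS ?leq_subr.
under [LHS]eq_bigr => k _ do rewrite hE.
rewrite -coefM_size_le ?size_elem_poly //.
have -> : elem_poly j * P
    = Z * geom c.+1 (x j) * \prod_(i | i != j) ((1 - x i *: 'X) * geom c.+1 (x i)).
  rewrite /P /xs big_map big_enum (bigD1 j) //= big_split /= /elem_poly.
  by rewrite mulrCA (mulrCA (\prod_(i | i != j) _)) mulrA.
have cancel_rest : agree_below c.+1
    (\prod_(i | i != j) ((1 - x i *: 'X) * geom c.+1 (x i))) (\prod_(i | i != j) 1).
  by apply: agree_below_prod => i _; apply: agree_below_geom.
rewrite (@agree_belowM _ c.+1 _ _ _ _ (fun _ _ => erefl) cancel_rest) // big1_eq mulr1.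
exact: coef_prod_lin_geom.
Qed.

Definition bialt_mx (f : R -> R) : 'M[R]_m.+1 :=
  \matrix_(j, l) if l == ord0 then f (x j) else x j ^+ (m - l).

Lemma det_bialt_mx (f : R -> R) :
  \det (bialt_mx f)
    = alt (fun x' => f (x' ord0) * xrho (fun i : 'I_m => x' (lift ord0 i))) x.
Proof.
rewrite -det_tr; apply: eq_bigr => s _; congr (_ * _).
rewrite big_ord_recl !mxE eqxx; congr (_ * _); apply: eq_bigr => i _.
by rewrite !mxE /= /bump /= add1n -subnDA add1n.
Qed.

Lemma det_bialt_mx_pow :
  \det (bialt_mx (fun z => z ^+ m)) = alt (@xrho _ _) x.
Proof.
rewrite -det_tr; apply: eq_bigr => s _; congr (_ * _); apply: eq_bigr => i _.
by rewrite !mxE /= subn1; case: eqP => [->|]; rewrite ?subn0.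
Qed.

Definition complete_mx (g : 'I_m.+1 -> R) : 'M[R]_m.+1 :=
  \matrix_(k, l) if l == ord0 then g k else hsuperZ xs [::] ((m - l)%N%:Z - k%:Z).

Lemma cofactor_complete_mx g1 g2 i :
  cofactor (complete_mx g1) i ord0 = cofactor (complete_mx g2) i ord0.
Proof.
rewrite !expand_cofactor; apply: eq_bigr => s /eqP s_i; congr (_ * _).
apply: eq_bigr => k k_i; rewrite !mxE.
by have /negbTE -> : s k != ord0 by rewrite -s_i (inj_eq perm_inj) eq_sym.
Qed.

(* complete_mx g is triangular except in column 0: only the last row of that
   column contributes to the determinant. *)
Lemma det_complete_mx g :
  \det (complete_mx g) = g ord_max * cofactor (complete_mx g) ord_max ord0.
Proof.
rewrite (expand_det_col _ ord0) (bigD1 ord_max) //= big1 ?addr0; first by rewrite mxE eqxx.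
move=> i i_max; rewrite expand_cofactor big1 ?mulr0 // => s /eqP s_i.
rewrite (bigD1 ord_max) ?i_max //=.
have s_max : s ord_max != ord0 by rewrite -s_i (inj_eq perm_inj) eq_sym.
have s_gt0 : (0 < s ord_max)%N.
  by rewrite lt0n; apply: contraNneq s_max => s0; exact/eqP/val_inj.
have m_gt0 : (0 < m)%N := leq_trans s_gt0 (ltn_ord (s ord_max)).
by rewrite mxE (negbTE s_max) hsuperZ_nat /= leqNgt ltn_subrL s_gt0 m_gt0 mul0r mulr0.
Qed.

(* Multiplying the matrix of the elem_poly coefficients by complete_mx
   produces alternants, column 0 by elem_complete_conv. *)
Lemma bialt_mx_factor (zs : seq R) c : (size zs <= c)%N ->
  bialt_mx (fun z => z ^+ (c - size zs) * \prod_(y <- zs) (z - y))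
  = (\matrix_(j, k) (elem_poly j)`_k) *m complete_mx (fun k => hsuperZ xs zs (c%:Z - k%:Z)).
Proof.
move=> lezc; apply/matrixP => j l; rewrite mxE [RHS]mxE.
under [RHS]eq_bigr => k _ do rewrite !mxE.
case: eqP => [_ | /eqP l0]; first by rewrite elem_complete_conv.
by rewrite elem_complete_conv ?leq_subr // subn0 big_nil mulr1.
Qed.

Lemma det_bialt_mx_complete (ys : seq R) b : (size ys <= b)%N -> (m <= b)%N ->
  \det (bialt_mx (fun z => z ^+ (b - size ys) * \prod_(y <- ys) (z - y)))
    = hsuper xs ys (b - m) * \det (bialt_mx (fun z => z ^+ m)).
Proof.
move=> leyb lemb.
have -> : bialt_mx (fun z => z ^+ m)
          = bialt_mx (fun z => z ^+ (m - size (Nil R)) * \prod_(y <- Nil R) (z - y)).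
  by apply/matrixP => j l; rewrite !mxE subn0 big_nil mulr1.
rewrite !bialt_mx_factor // !det_mulmx !det_complete_mx.
rewrite (cofactor_complete_mx _ (fun k => hsuperZ xs [::] (m%:Z - k%:Z))).
by rewrite !hsuperZ_nat lemb leqnn subnn hsuper0 mul1r mulrCA.
Qed.

End Bialternant.

Section JacobiTrudy.
Context {R : comRingType}.

Definition JT (xs ys : seq R) (lam : seq nat) (L : nat) : 'M[R]_L :=
  \matrix_(r, s) hsuperZ xs ys ((nth 0%N lam r)%:Z - (r : nat)%:Z + (s : nat)%:Z).

Lemma JT_row0 xs ys lam L (k : 'I_L.+1) :
  JT xs ys lam L.+1 ord0 k = hsuper xs ys (nth 0%N lam 0 + k).
Proof. by rewrite mxE subr0 -PoszD. Qed.

Lemma JT_perm {xs1 xs2} ys lam L :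
  perm_eq xs1 xs2 -> JT xs1 ys lam L = JT xs2 ys lam L.
Proof. by move=> pxs; apply/matrixP => i j; rewrite !mxE; apply: hsuperZ_perm. Qed.

(* For a partition, SP is the determinant of the Jacobi-Trudy matrix of size
   1 + l(behead lam): when lam_1 = 0 this is the 1 x 1 matrix (h_0) = (1). *)
Lemma SP_first_row xs ys lam : is_partition lam ->
  SP xs ys lam = \det (JT xs ys lam (plen (behead lam)).+1).
Proof.
have SP_plen0 mu : plen mu = 0%N -> SP xs ys mu = 1.
  move=> mu0; rewrite /SP; move: (\matrix_(r < plen mu, s < plen mu) _).
  by rewrite mu0 => M; apply: det_mx00.
have JT1 mu : nth 0%N mu 0 = 0%N -> \det (JT xs ys mu 1) = 1.
  by move=> mu0; rewrite det_mx11 (JT_row0 _ _ _ _ ord0) mu0 hsuper0.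
case: lam => [|[|a] t] /= lam_part; first by rewrite SP_plen0 // JT1.
  have t0 : plen t = 0%N.
    move: lam_part; rewrite /is_partition /=.
    elim: t => [|b t IH] //= /andP [b0 bt]; rewrite leqn0 in b0.
    by rewrite /plen /= b0 -/(plen t) IH // -(eqP b0).
  by rewrite SP_plen0 ?t0 ?JT1 // /plen /= -/(plen t) t0.
by [].
Qed.

Lemma det_set_row0 L (A : 'M[R]_L.+1) (v : 'I_L.+1 -> R) :
  \det (\matrix_(r, s) if r == ord0 then v s else A r s)
    = \sum_k v k * cofactor A ord0 k.
Proof.
rewrite (expand_det_row _ ord0); apply: eq_bigr => k _; rewrite mxE eqxx; congr (_ * _).
rewrite !expand_cofactor; apply: eq_bigr => s _; congr (_ * _).
by apply: eq_bigr => i /negbTE i0; rewrite mxE eq_sym i0.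
Qed.

Definition shift_mx (w : R) L : 'M[R]_L.+1 :=
  \matrix_(k, s) (((k : nat) == s)%:R - w * ((k.+1 == s)%:R)).

(* shift_mx w is upper unitriangular. *)
Lemma det_shift_mx w L : \det (shift_mx w L) = 1.
Proof.
rewrite -det_tr det_trig; last first.
  apply/forallP => i; apply/forallP => j; apply/implyP => ltij.
  by rewrite !mxE (gtn_eqF ltij) (gtn_eqF (ltnW ltij : (i < j.+1)%N)) mulr0 subr0.
by apply: big1 => i _; rewrite !mxE eqxx (gtn_eqF (ltnSn i)) mulr0 subr0.
Qed.

Lemma sum_shift_mx (w : R) L (F : nat -> R) (s : 'I_L.+1) :
  \sum_(k < L.+1) F k * shift_mx w L k s
    = F s - (if (s : nat) is s'.+1 then w * F s' else 0).
Proof.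
under eq_bigr => k _ do rewrite mxE mulrBr.
rewrite sumrB (bigD1 s) //= eqxx mulr1 big1 ?addr0; last first.
  by move=> k /negbTE ks; rewrite (_ : (k : nat) == s = false) ?mulr0.
congr (_ - _); case: s => [[|s'] lt_s] /=.
  by rewrite big1 // => k _; rewrite mulr0n !mulr0.
rewrite (bigD1 (Ordinal (ltnW lt_s))) //= eqxx mulr1 big1 ?addr0; first by rewrite mulrC.
move=> k /negbTE ks; rewrite (_ : k.+1 == s'.+1 = false) ?mulr0 //.
Qed.

(* The Jacobi-Trudy matrix of w :: ws with first row replaced by (w^s), times
   shift_mx w, has first row (1, 0, ..., 0) and, by hsuperZ_drop, the
   Jacobi-Trudy matrix of ws for behead lam as its lower-right minor. *)
Lemma SP_cofactor_expand (w : R) ws ys lam :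
  let L := plen (behead lam) in
  SP ws ys (behead lam)
    = \sum_(k < L.+1) w ^+ k * cofactor (JT (w :: ws) ys lam L.+1) ord0 k.
Proof.
move=> L; set J := JT (w :: ws) ys lam L.+1.
set Jw := \matrix_(r, s) if r == ord0 then w ^+ s else J r s.
have JwU0 (s : 'I_L.+1) : (Jw *m shift_mx w L) ord0 s = (s == ord0)%:R.
  rewrite mxE; under eq_bigr => k _ do rewrite mxE eqxx.
  rewrite (sum_shift_mx w L (fun n => w ^+ n)).
  case: s => [[|s] lt_s] /=; first by rewrite subr0.
  by rewrite exprS subrr.
have minor : row' ord0 (col' ord0 (Jw *m shift_mx w L)) = JT ws ys (behead lam) L.
  apply/matrixP => r s; rewrite !mxE.
  set F := fun n : nat =>
    hsuperZ (w :: ws) ys ((nth 0%N lam r.+1)%:Z - (r.+1)%:Z + n%:Z).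
  rewrite (eq_bigr (fun k : 'I_L.+1 => F k * shift_mx w L k (lift ord0 s))); last first.
    by move=> k _; rewrite !mxE.
  rewrite sum_shift_mx /= /bump /= add1n add0n /F [RHS](hsuperZ_drop w) -nth_behead.
  congr (hsuperZ _ _ _ - w * hsuperZ _ _ _).
    by rewrite -[r.+1]addn1 -[s.+1]addn1 !PoszD opprD !addrA (addrAC _ (-1)) subrK.
  by rewrite -[r.+1]addn1 PoszD opprD !addrA (addrAC _ (-1)).
rewrite -det_set_row0 -/Jw -[\det Jw]mulr1 -(det_shift_mx w L) -det_mulmx.
rewrite (expand_det_row _ ord0) (bigD1 ord0) //= big1 ?addr0; last first.
  by move=> k /negbTE k0; rewrite JwU0 k0 mul0r.
by rewrite JwU0 eqxx mul1r /cofactor /= expr0 mul1r minor.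
Qed.

End JacobiTrudy.

Section FirstVariable.
Context {R : comRingType} {m : nat} (x : 'I_m.+1 -> R).

Let xs := [seq x i | i <- enum 'I_m.+1].

Lemma perm_cons_lift (s : 'S_m.+1) :
  perm_eq (x (s ord0) :: [seq x (s (lift ord0 i)) | i <- enum 'I_m]) xs.
Proof.
suff -> : x (s ord0) :: [seq x (s (lift ord0 i)) | i <- enum 'I_m]
          = [seq (x \o s) i | i <- enum 'I_m.+1] by apply: perm_map_enum.
by rewrite enum_ordSl /= -map_comp.
Qed.

Definition first_var_term (ys : seq R) (lam : seq nat) (x' : 'I_m.+1 -> R) : R :=
  \prod_(y <- ys) (x' ord0 - y) * x' ord0 ^+ (nth 0%N lam 0 + m - size ys)
  * SP [seq x' (lift ord0 i) | i <- enum 'I_m] ys (behead lam)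
  * xrho (fun i : 'I_m => x' (lift ord0 i)).

(* The core identity: expand SP along its first row, turn each h_(lam_1 + k)
   times the Vandermonde into a bialternant, and regroup the cofactors by
   SP_cofactor_expand, after reordering the variables. *)
Lemma SP_mul_alt_xrho (ys : seq R) (lam : seq nat) :
  is_partition lam -> (size ys <= nth 0%N lam 0 + m)%N ->
  SP xs ys lam * alt (@xrho _ _) x = alt (first_var_term ys lam) x.
Proof.
move=> lam_part le_ys.
set a := nth 0%N lam 0; set L := plen (behead lam); set J := JT xs ys lam L.+1.
pose f k z := z ^+ (a + k + m - size ys) * \prod_(y <- ys) (z - y).
have bialt_k (k : 'I_L.+1) :
    J ord0 k * \det (bialt_mx x (fun z => z ^+ m)) = \det (bialt_mx x (f k)).
  rewrite JT_row0 det_bialt_mx_complete ?addnK //; last by rewrite leq_addl.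
  by rewrite (leq_trans le_ys) // addnAC leq_addr.
have term_s (s : 'S_m.+1) :
    \sum_(k < L.+1)
       cofactor J ord0 k * (f k (x (s ord0)) * xrho (fun i => x (s (lift ord0 i))))
    = first_var_term ys lam (x \o s).
  rewrite /first_var_term /= (SP_cofactor_expand (x (s ord0))) mulr_sumr mulr_suml.
  rewrite (JT_perm _ _ _ (perm_cons_lift s)) -/J; apply: eq_bigr => k _.
  have exp_k : (a + k + m - size ys = a + m - size ys + k)%N by rewrite addnAC addnBAC.
  by rewrite /f exp_k exprD -/a; ring.
rewrite -det_bialt_mx_pow (SP_first_row _ _ _ lam_part) (expand_det_row _ ord0) mulr_suml.
under eq_bigr => k _ do rewrite mulrAC bialt_k det_bialt_mx /alt mulr_suml.
rewrite exchange_big; apply: eq_bigr => s _.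
rewrite -term_s mulr_sumr; apply: eq_bigr => k _.
by rewrite -mulrA [_ * cofactor _ _ _]mulrC.
Qed.

End FirstVariable.

(* Lemma 2.2, with m + 1 x-variables and n y-variables, so d = m + 1 - n and the
   exponent lam_1 + d - 1 is lam_1 + m - n.  Both antisymmetrizations factor off
   alt(y^rho), leaving the identity SP_mul_alt_xrho. *)
Theorem lemma2p2 (R : comRingType) (m n : nat) (lam : seq nat)
    (Hlam : is_partition lam)
    (Hexp : (n <= nth 0 lam 0 + m)%N)
    (x : 'I_m.+1 -> R) (y : 'I_n -> R) :
  antisym (fun x' y' =>
             SP [seq x' i | i <- enum 'I_m.+1] [seq y' j | j <- enum 'I_n] lam
             * xrho x' * xrho y') x y
  =
  antisym (fun x' y' =>
             (\prod_(j < n) (x' ord0 - y' j)) * x' ord0 ^+ (nth 0 lam 0 + m - n)%N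
             * SP [seq x' (lift ord0 i) | i <- enum 'I_m]
                  [seq y' j | j <- enum 'I_n] (behead lam)
             * xrho (fun i : 'I_m => x' (lift ord0 i)) * xrho y') x y.
Proof.
set xs := [seq x i | i <- enum 'I_m.+1]; set ys := [seq y j | j <- enum 'I_n].
have size_ys : size ys = n by rewrite size_map size_enum_ord.
rewrite (@antisym_factor _ _ _ _ (SP xs ys lam) (@xrho _ _) (@xrho _ _)); last first.
  by move=> s t; rewrite (SP_perm lam (perm_map_enum x s) (perm_map_enum y t)) -/xs -/ys.
rewrite (@antisym_factor _ _ _ _ 1 (first_var_term ys lam) (@xrho _ _)); last first.
  move=> s t; rewrite mul1r /first_var_term size_ys.
  rewrite (SP_perm (behead lam) (perm_refl _) (perm_map_enum y t)) -/ys big_map big_enum.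
  by rewrite [in RHS](reindex_inj (@perm_inj _ t)).
by rewrite mul1r SP_mul_alt_xrho // size_ys.
Qed.
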